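(* Let $\mathbf A$ be an algebra with a Mal'cev term $q$, let $n\ge1$, and let $\alpha_0,\dots,\alpha_{n-1}$ be congruences of $\mathbf A$. Then there exists a largest clone $\mathcal C$ on $A$ such that: $q\in\mathcal C$; every operation of $\mathcal C$ preserves each of $\alpha_0,\dots,\alpha_{n-1}$; and for every nonempty $I\subseteq\{0,\dots,n-1\}$ the commutator $[\alpha_i\mid i\in I]$ computed in $\mathbf A$ equals the commutator $[\alpha_i\mid i\in I]$ computed in the algebra $(A,\mathcal C)$. (In fact $\mathcal C$ is the clone of all polymorphisms of the relation $\Delta_{\mathbf A}(\alpha_0,\dots,\alpha_{n-1})$.)
   Context: A Mal'cev term of $\mathbf A$ is a ternary term operation $q$ with $q(x,x,y)=y=q(y,x,x)$ for all $x,y$. For a clone $\mathcal C$ on $A$, $(A,\mathcal C)$ denotes the algebra whose basic (equivalently, term) operations are those of $\mathcal C$. Higher commutator (Bulatov): for congruences $\alpha_0,\dots,\alpha_{m-1},\gamma$ of an algebra, say $\alpha_0,\dots,\alpha_{m-2}$ centralize $\alpha_{m-1}$ modulo $\gamma$ if for all tuples $\mathbf a_i,\mathbf b_i$ ($i<m$, with $\mathbf a_i\neq\mathbf b_i$ congruent modulo $\alpha_i$ coordinatewise) and every term operation $t$ such that $t(\mathbf x_0,\dots,\mathbf x_{m-2},\mathbf a_{m-1})\equiv_\gamma t(\mathbf x_0,\dots,\mathbf x_{m-2},\mathbf b_{m-1})$ for all $(\mathbf x_0,\dots,\mathbf x_{m-2})\in(\{\mathbf a_0,\mathbf b_0\}\times\dots\times\{\mathbf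 a_{m-2},\mathbf b_{m-2}\})\setminus\{(\mathbf b_0,\dots,\mathbf b_{m-2})\}$, we have $t(\mathbf b_0,\dots,\mathbf b_{m-2},\mathbf a_{m-1})\equiv_\gamma t(\mathbf b_0,\dots,\mathbf b_{m-2},\mathbf b_{m-1})$. The commutator $[\alpha_0,\dots,\alpha_{m-1}]$ is the smallest congruence $\gamma$ such that $\alpha_0,\dots,\alpha_{m-2}$ centralize $\alpha_{m-1}$ modulo $\gamma$. For $I=\{i_0<\dots<i_{k-1}\}$, $[\alpha_i\mid i\in I]$ means $[\alpha_{i_0},\dots,\alpha_{i_{k-1}}]$. For $k\ge0$, $k_{(i)}$ is the $i$-th binary digit of $k$ (least significant is $i=0$). For $a,b\in A$ and $i<n$, $\mathbf c_i^n(a,b)\in A^{2^n}$ has $k$-th coordinate $a$ if $k_{(i)}=0$ and $b$ if $k_{(i)}=1$. $\Delta_{\mathbf A}(\alpha_0,\dots,\alpha_{n-1})$ is the subuniverse of $\mathbf A^{2^n}$ generated by $\{\mathbf c_i^n(a,b): i<n,\ (a,b)\in\alpha_i\}$. *)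

From mathcomp Require Import all_boot.
Set Implicit Arguments. Unset Strict Implicit. Unset Printing Implicit Defensive.

Definition Op (A : Type) (n : nat) := ('I_n -> A) -> A.

Record algebra (A : Type) := Algebra {
  sym : Type;
  ar : sym -> nat;
  op : forall s : sym, Op A (ar s) }.

Inductive term (A : Type) (Al : algebra A) (n : nat) : Type :=
| Var : 'I_n -> term Al n
| App : forall s : sym Al, ('I_(ar s) -> term Al n) -> term Al n.

Fixpoint eval (A : Type) (Al : algebra A) (n : nat) (t : term Al n) (x : 'I_n -> A) : A :=
  match t with
  | Var i => x i
  | App s ts => @op A Al s (fun i => eval (ts i) x)
  end.

Definition termop (A : Type) (Al : algebra A) (n : nat) (f : Op A n) : Prop :=
  exists t : term Al n, forall x, f x = eval t x.

Definition clone (A : Type) := forall n : nat, Op A n -> Prop.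

Definition is_clone (A : Type) (C : clone A) : Prop :=
  (forall n (i : 'I_n) (f : Op A n), (forall x, f x = x i) -> C n f) /\
  (forall n k (g : Op A k) (h : 'I_k -> Op A n) (f : Op A n),
      C k g -> (forall j, C n (h j)) ->
      (forall x, f x = g (fun j => h j x)) -> C n f).

Definition clone_sub (A : Type) (D C : clone A) : Prop :=
  forall n f, D n f -> C n f.

Definition clone_alg (A : Type) (C : clone A) : algebra A :=
  @Algebra A {n : nat & {f : Op A n | C n f}} (fun s => projT1 s)
    (fun s => proj1_sig (projT2 s)).

Definition preserves (A : Type) (n : nat) (f : Op A n) (theta : A -> A -> Prop) :=
  forall x y : 'I_n -> A, (forall i, theta (x i) (y i)) -> theta (f x) (f y).

Definition equivalence_rel (A : Type) (theta : A -> A -> Prop) :=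
  (forall x, theta x x) /\ (forall x y, theta x y -> theta y x) /\
  (forall x y z, theta x y -> theta y z -> theta x z).

Definition congruence (A : Type) (Al : algebra A) (theta : A -> A -> Prop) :=
  equivalence_rel theta /\ forall s : sym Al, preserves (@op A Al s) theta.

Definition mk3 (A : Type) (x y z : A) : 'I_3 -> A :=
  fun i => match val i with 0 => x | 1 => y | _ => z end.

Definition malcev (A : Type) (Al : algebra A) (q : Op A 3) :=
  termop Al q /\ forall x y, q (mk3 x x y) = y /\ q (mk3 y x x) = y.

(* The k congruences al 0, ..., al (k-1); the last one
   (index k-1) plays the special role.  The tuples a_0,...,a_{k-1} (resp. b_i)
   are encoded as one tuple a (resp. b) of length N together with a map
   blk : 'I_N -> 'I_k assigning each variable of t to its block. *)
Definition sel (A : Type) (N k : nat) (blk : 'I_N -> 'I_k) (a b : 'I_N -> A)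
  (c : 'I_k -> bool) : 'I_N -> A :=
  fun j => if c (blk j) then b j else a j.

Definition upd (k : nat) (c : 'I_k -> bool) (v : bool) : 'I_k -> bool :=
  fun i => if val i == k.-1 then v else c i.

Definition centralizes (A : Type) (Al : algebra A) (k : nat)
  (al : 'I_k -> A -> A -> Prop) (gamma : A -> A -> Prop) : Prop :=
  forall (N : nat) (blk : 'I_N -> 'I_k) (a b : 'I_N -> A) (t : Op A N),
    termop Al t ->
    (forall j, al (blk j) (a j) (b j)) ->
    (forall i : 'I_k, ~ (forall j, blk j = i -> a j = b j)) ->
    (forall c : 'I_k -> bool,
        (exists i : 'I_k, val i != k.-1 /\ c i = false) ->
        gamma (t (sel blk a b (upd c false))) (t (sel blk a b (upd c true)))) ->
    gamma (t (sel blk a b (upd (fun _ => true) false)))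
          (t (sel blk a b (fun _ => true))).

Definition commutator (A : Type) (Al : algebra A) (k : nat)
  (al : 'I_k -> A -> A -> Prop) : A -> A -> Prop :=
  fun x y => forall gamma, congruence Al gamma -> centralizes Al al gamma -> gamma x y.

(* [al_i | i in I], indices listed increasingly *)
Definition subfam (A : Type) (n : nat) (al : 'I_n -> A -> A -> Prop)
  (I : {set 'I_n}) : 'I_#|I| -> A -> A -> Prop :=
  fun j => al (enum_val j).
Arguments subfam {A n} al I _ _ _.

Definition cvec (A : Type) (n : nat) (i : 'I_n) (a b : A) : 'I_(2 ^ n) -> A :=
  fun k => if odd (val k %/ 2 ^ val i) then b else a.

Definition Delta (A : Type) (Al : algebra A) (n : nat) (al : 'I_n -> A -> A -> Prop)
  (w : 'I_(2 ^ n) -> A) : Prop :=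
  forall S : ('I_(2 ^ n) -> A) -> Prop,
    (forall (s : sym Al) (v : 'I_(ar s) -> 'I_(2 ^ n) -> A),
        (forall i, S (v i)) -> S (fun k => @op A Al s (fun i => v i k))) ->
    (forall (i : 'I_n) (a b : A), al i a b -> S (cvec i a b)) ->
    S w.

Definition Pol (A : Type) (N : nat) (R : ('I_N -> A) -> Prop) : clone A :=
  fun k f => forall v : 'I_k -> 'I_N -> A, (forall i, R (v i)) ->
    R (fun j => f (fun i => v i j)).

Definition good_clone (A : Type) (Al : algebra A) (q : Op A 3) (n : nat)
  (al : 'I_n -> A -> A -> Prop) (C : clone A) : Prop :=
  [/\ is_clone C, C 3 q,
      (forall k f, C k f -> forall i, preserves f (al i)) &
      (forall I : {set 'I_n}, I != set0 -> forall x y,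
          commutator Al (subfam al I) x y <->
          commutator (clone_alg C) (subfam al I) x y)].

From Pilot Require Import Defs.
From mathcomp Require Import all_boot zify.
From Stdlib Require Import FunctionalExtensionality Classical.
Set Implicit Arguments. Unset Strict Implicit. Unset Printing Implicit Defensive.

(* Write P_I(x, y) ([face_tuple I x y]) for the tuple of A^(2^n) that is y at the vertices whose
   support contains I and x elsewhere. In an algebra with a Mal'cev term, the commutator [alpha_i
   | i in I] is exactly the relation {(x, y) | P_I(x, y) \in Delta}. This relation is a
   congruence, and it centralizes as required because the Mal'cev term can correct a tuple of
   Delta on a whole class of vertices at once; conversely, writing P_I(x, y) as a term applied to
   generators c_i(a, b) puts (x, y) into every congruence modulo which the alpha_i centralize. On
   the other hand Delta is determined by these tuples: a tuple of Delta can be rebuilt vertex by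
   vertex in increasing order, the value at vertex k being corrected by a Mal'cev combination with
   P_(supp k), which lies in Delta by the previous step and the equality of commutators. Hence
   every clone with the required properties has the same Delta as A and lies in Pol Delta, while
   (A, Pol Delta) itself has the same Delta, hence the same commutators. *)

(* The vertex p of the cube {0,1}^n is the element of 'I_(2^n) whose i-th binary digit is its
   i-th coordinate, as in [cvec]. *)
Definition bit (p i : nat) : bool := odd (p %/ 2 ^ i).

Definition nat_of_bits (m : nat) (c : 'I_m -> bool) : nat := \sum_(i < m) c i * 2 ^ i.

Lemma nat_of_bitsS m (c : 'I_m.+1 -> bool) :
  nat_of_bits c = c ord0 + (nat_of_bits (fun i => c (lift ord0 i))).*2.
Proof.
rewrite /nat_of_bits big_ord_recl expn0 muln1 -mul2n big_distrr /=.
by congr (_ + _); apply: eq_bigr => i _; rewrite expnS mulnCA.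
Qed.

Lemma nat_of_bits_lt m (c : 'I_m -> bool) : nat_of_bits c < 2 ^ m.
Proof.
elim: m c => [|m IH] c; first by rewrite /nat_of_bits big_ord0.
rewrite nat_of_bitsS expnS; have := IH (fun i => c (lift ord0 i)).
by case: (c ord0) => /=; lia.
Qed.

Lemma bit_half p i : bit p i.+1 = bit p./2 i.
Proof. by rewrite /bit expnS divnMA divn2. Qed.

Lemma bit_nat_of_bits m (c : 'I_m -> bool) (i : 'I_m) : bit (nat_of_bits c) i = c i.
Proof.
elim: m c i => [|m IH] c i; first by case: i.
rewrite nat_of_bitsS; case: (unliftP ord0 i) => [j ->|->].
  by rewrite lift0 bit_half half_bit_double IH.
by rewrite /bit expn0 divn1 oddD odd_double addbF oddb.
Qed.

Lemma nat_of_bits_bit m p : p < 2 ^ m -> nat_of_bits (fun i : 'I_m => bit p i) = p.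
Proof.
elim: m p => [|m IH] p lt_p; first by rewrite /nat_of_bits big_ord0; case: p lt_p.
rewrite nat_of_bitsS.
have -> : nat_of_bits (fun i : 'I_m => bit p (lift ord0 i)) = p./2.
  rewrite -[RHS]IH; last by rewrite -divn2 ltn_divLR // -expnSr.
  by apply: eq_bigr => i _; rewrite lift0 bit_half.
by rewrite /bit expn0 divn1 odd_double_half.
Qed.

Definition ord_of_bits n (c : 'I_n -> bool) : 'I_(2 ^ n) := Ordinal (nat_of_bits_lt c).

Lemma bit_ord_of_bits n (c : 'I_n -> bool) (i : 'I_n) : bit (ord_of_bits c) i = c i.
Proof. exact: bit_nat_of_bits. Qed.

Lemma ord_of_bits_bit n (p : 'I_(2 ^ n)) : ord_of_bits (fun i : 'I_n => bit p i) = p.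
Proof. by apply: val_inj; apply: nat_of_bits_bit. Qed.

Lemma leq_bits n (p p' : 'I_(2 ^ n)) :
  (forall i : 'I_n, bit p i -> bit p' i) -> p <= p'.
Proof.
move=> sub; rewrite -(ord_of_bits_bit p) -(ord_of_bits_bit p') /=.
by apply: leq_sum => i _; move: (sub i); case: (bit p i); case: (bit p' i) => // ->.
Qed.

Lemma cvecE A n (i : 'I_n) (a b : A) (p : 'I_(2 ^ n)) :
  cvec i a b p = if bit p i then b else a.
Proof. by []. Qed.

Lemma forall_in_enum (T : finType) (D : {set T}) (P : pred T) :
  [forall x in D, P x] = [forall r : 'I_#|D|, P (enum_val r)].
Proof.
apply/forall_inP/forallP => [PD r | PD x xD]; first exact/PD/enum_valP.
by rewrite -(enum_rankK_in xD xD); apply: PD.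
Qed.

Lemma fun_prefix_ind (T : Type) (N : nat) (Q : ('I_N -> T) -> Prop) (z : 'I_N -> T) :
  (exists w, Q w) ->
  (forall (w : 'I_N -> T) (k : 'I_N), Q w -> (forall p : 'I_N, p < k -> w p = z p) ->
     exists2 w', Q w' & forall p : 'I_N, p <= k -> w' p = z p) ->
  Q z.
Proof.
move=> [w0 Qw0] step.
suff: forall m, m <= N -> exists2 w, Q w & forall p : 'I_N, p < m -> w p = z p.
  move=> /(_ N (leqnn N)) [w Qw wz].
  by have <- : w = z by apply: functional_extensionality => p; apply: wz.
elim=> [|m IH] lt_mN; first by exists w0.
have [w Qw wz] := IH (ltnW lt_mN).
by have [w' Qw' w'z] := step w (Ordinal lt_mN) Qw wz; exists w'.
Qed.

Lemma mk3_app A T (u v w : T -> A) (p : T) :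
  (fun i => mk3 u v w i p) = mk3 (u p) (v p) (w p).
Proof. by apply: functional_extensionality => i; rewrite /mk3; case: (val i) => [|[|]]. Qed.

Section Congruences.
Variables (A : Type) (B : algebra A) (gam : A -> A -> Prop).
Hypothesis gam_cong : congruence B gam.

Lemma cong_refl x : gam x x.
Proof. by case: gam_cong => -[refl _] _; apply: refl. Qed.

Lemma cong_sym x y : gam x y -> gam y x.
Proof. by case: gam_cong => -[_ [sym _]] _; apply: sym. Qed.

Lemma cong_trans x y z : gam x y -> gam y z -> gam x z.
Proof. by case: gam_cong => -[_ [_ trans]] _; apply: trans. Qed.

Lemma cong_termop m (f : Op A m) x y :
  termop B f -> (forall j, gam (x j) (y j)) -> gam (f x) (f y).
Proof.
move=> [t ft] xy; rewrite !ft {ft}; elim: t => [i|s ts IH] //=.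
by case: gam_cong => _ pres; apply: pres.
Qed.

(* If some block is degenerate, t ignores it and x = y; otherwise this is the centrality
   condition, whose hypotheses hold trivially. *)
Lemma corner_rel k (al' : 'I_k -> A -> A -> Prop) N (blk : 'I_N -> 'I_k) a b
    (t : Op A N) x y :
  centralizes B al' gam -> 0 < k -> termop B t ->
  (forall j, al' (blk j) (a j) (b j)) ->
  (forall c, t (sel blk a b c) = if [forall r, c r] then y else x) -> gam x y.
Proof.
move=> cent k_gt0 tt ab tE.
have allT : [forall r : 'I_k, true] by apply/forallP.
have [[r triv] | nontriv] := classic (exists r, forall j, blk j = r -> a j = b j).
  suff -> : x = y by exact: cong_refl.
  have notall : [forall r', r' != r] = false by apply/forallP => /(_ r); rewrite eqxx.
  have := tE (fun r' => r' != r); have := tE (fun _ => true).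
  rewrite /= allT notall => <- <-; congr t; apply: functional_extensionality => j.
  by rewrite /sel; case: eqP => [/triv|].
have lt_last : k.-1 < k by rewrite ltn_predL.
have not_all : [forall r : 'I_k, upd (fun _ => true) false r] = false.
  by apply/forallP => /(_ (Ordinal lt_last)); rewrite /upd eqxx.
have := tE (upd (fun _ => true) false); have := tE (fun _ => true).
rewrite /= allT not_all => <- <-.
apply: (cent N blk a b t tt ab) => [r r_triv | c [r [r_last cr]]].
  by apply: nontriv; exists r.
have upd_false v : [forall r', upd c v r'] = false.
  by apply/forallP => /(_ r); rewrite /upd (negbTE r_last) cr.
by rewrite !tE !upd_false; exact: cong_refl.
Qed.
End Congruences.

Lemma malcevL A (B : algebra A) q x y : malcev B q -> q (mk3 x x y) = y.
Proof. by case=> _ /(_ x y) []. Qed.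

Lemma malcevR A (B : algebra A) q x y : malcev B q -> q (mk3 y x x) = y.
Proof. by case=> _ /(_ x y) []. Qed.

Section TermOperations.
Variables (A : Type) (B : algebra A).

Fixpoint subst (k m : nat) (t : term B k) (ts : 'I_k -> term B m) : term B m :=
  match t with
  | Var i => ts i
  | App s us => App (fun i => subst (us i) ts)
  end.

Lemma eval_subst k m (t : term B k) (ts : 'I_k -> term B m) x :
  eval (subst t ts) x = eval t (fun j => eval (ts j) x).
Proof.
by elim: t => [i|s us IH] //=; congr (op _); apply: functional_extensionality.
Qed.
End TermOperations.

Section Delta.
Variables (A : Type) (B : algebra A) (n : nat) (al : 'I_n -> A -> A -> Prop).
Local Notation Dl := (Delta B al).

Lemma Delta_gen i a b : al i a b -> Dl (cvec i a b).
Proof. by move=> ab S _; apply. Qed.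

Lemma Pol_Delta_op (s : sym B) : Pol Dl (@op A B s).
Proof. by move=> v Dv S closedS genS; apply: (closedS) => i; apply: Dv. Qed.

Lemma Pol_Delta_termop m (f : Op A m) : termop B f -> Pol Dl f.
Proof.
move=> [t ft] v Dv.
have -> : (fun p => f (fun j => v j p)) = (fun p => eval t (fun j => v j p)).
  by apply: functional_extensionality => p; rewrite ft.
elim: t {ft} => [i|s ts IH] /=; first exact: Dv.
exact: (@Pol_Delta_op s _ IH).
Qed.

Lemma Delta_edge i w :
  congruence B (al i) -> Dl w ->
  al i (w (ord_of_bits (fun _ => false))) (w (ord_of_bits (fun i' => i' == i))).
Proof.
move=> al_cong Dw; pose e0 := ord_of_bits (fun _ : 'I_n => false).
pose ei := ord_of_bits (fun i' => i' == i).
apply: (Dw (fun w => al i (w e0) (w ei))).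
  by move=> s v; case: al_cong => _ pres; apply: pres.
move=> i' a b ab; rewrite !cvecE !bit_ord_of_bits.
by case: eqP => [<-|_] //; apply: cong_refl al_cong _.
Qed.

Definition gen_tuple N (G : 'I_N -> 'I_n * A * A) (p : 'I_(2 ^ n)) : 'I_N -> A :=
  fun j => cvec (G j).1.1 (G j).1.2 (G j).2 p.

Definition term_generated (w : 'I_(2 ^ n) -> A) : Prop :=
  exists N (G : 'I_N -> 'I_n * A * A) (t : term B N),
    (forall j, al (G j).1.1 (G j).1.2 (G j).2) /\ w = fun p => eval t (gen_tuple G p).

Lemma term_generated_family m (v : 'I_m -> 'I_(2 ^ n) -> A) :
  (forall i, term_generated (v i)) ->
  exists N (G : 'I_N -> 'I_n * A * A) (ts : 'I_m -> term B N),
    (forall j, al (G j).1.1 (G j).1.2 (G j).2) /\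
    forall i, v i = fun p => eval (ts i) (gen_tuple G p).
Proof.
elim: m v => [|m IH] v gen_v.
  have G0 : 'I_0 -> 'I_n * A * A by case.
  have ts0 : 'I_0 -> term B 0 by case.
  by exists 0, G0, ts0; split; case.
have [N1 [G1 [ts1 [ok1 v1]]]] := IH (fun i => v (lift ord0 i)) (fun i => gen_v _).
have [N2 [G2 [t2 [ok2 v2]]]] := gen_v ord0.
pose G j := match split j with inl j1 => G1 j1 | inr j2 => G2 j2 end.
exists (N1 + N2), G, (fun i => if unlift ord0 i is Some i'
  then subst (ts1 i') (fun j => Var B (lshift N2 j))
  else subst t2 (fun j => Var B (rshift N1 j))).
split=> [j|i]; first by rewrite /G; case: (split j).
have genG p (j : 'I_(N1 + N2)) : gen_tuple G p j =
  match split j with inl j1 => gen_tuple G1 p j1 | inr j2 => gen_tuple G2 p j2 end.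
  by rewrite /gen_tuple /G; case: (split j).
apply: functional_extensionality => p.
case: unliftP => [i'|] -> /=; rewrite eval_subst /= ?v1 ?v2; congr eval;
  apply: functional_extensionality => j; rewrite genG.
  by rewrite -[lshift _ _]/(unsplit (inl j)) unsplitK.
by rewrite -[rshift _ _]/(unsplit (inr j)) unsplitK.
Qed.

Lemma Delta_term_generated w : Dl w -> term_generated w.
Proof.
apply=> [s v /term_generated_family [N [G [ts [ok vE]]]] | i a b ab].
  exists N, G, (App ts); split=> //; apply: functional_extensionality => p /=.
  by congr (op _); apply: functional_extensionality => i; rewrite vE.
by exists 1, (fun _ => (i, a, b)), (Var B ord0).
Qed.

Hypothesis al_cong : forall i, congruence B (al i).
Hypothesis n_gt0 : 0 < n.

Lemma Delta_const x : Dl (fun _ => x).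
Proof.
have -> : (fun _ => x) = cvec (Ordinal n_gt0) x x.
  by apply: functional_extensionality => p; rewrite cvecE if_same.
by apply: Delta_gen; apply: cong_refl (al_cong _) _.
Qed.

Lemma Delta_map (h : 'I_n -> bool -> bool) w :
  Dl w -> Dl (fun p => w (ord_of_bits (fun i => h i (bit p i)))).
Proof.
move=> Dw; apply: (Dw (fun w => Dl (fun p => w (ord_of_bits (fun i => h i (bit p i)))))).
  by move=> s v Dv; apply: (@Pol_Delta_op s (fun i p => v i _)).
move=> i a b ab; pose pick v := if v then b else a.
have -> : (fun p : 'I_(2 ^ n) => cvec i a b (ord_of_bits (fun j => h j (bit p j)))) =
          cvec i (pick (h i false)) (pick (h i true)).
  by apply: functional_extensionality => p; rewrite !cvecE bit_ord_of_bits; case: (bit p i).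
apply: Delta_gen; rewrite /pick; have := al_cong i.
by case: (h i false); case: (h i true) => /= cong;
  [apply: cong_refl | apply: cong_sym | | apply: cong_refl].
Qed.

Variable q : Op A 3.
Hypothesis q_malcev : malcev B q.

Lemma Delta_q u v w : Dl u -> Dl v -> Dl w -> Dl (fun p => q (mk3 (u p) (v p) (w p))).
Proof.
move=> Du Dv Dw.
have -> : (fun p => q (mk3 (u p) (v p) (w p))) = (fun p => q (fun i => mk3 u v w i p)).
  by apply: functional_extensionality => p; rewrite mk3_app.
by apply: (Pol_Delta_termop q_malcev.1) => i; rewrite /mk3; case: (val i) => [|[|]].
Qed.

Definition face_tuple (I : {set 'I_n}) (x y : A) : 'I_(2 ^ n) -> A :=
  fun p => if [forall i in I, bit p i] then y else x.

Definition Delta_comm I x y := Dl (face_tuple I x y).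

Lemma Delta_comm_cong I : congruence B (Delta_comm I).
Proof.
have faceE (f : bool -> A) :
    face_tuple I (f false) (f true) = fun p => f [forall i in I, bit p i].
  by apply: functional_extensionality => p; rewrite /face_tuple; case: ifP.
refine (conj (conj _ (conj _ _)) _).
- move=> x; rewrite /Delta_comm (faceE (fun _ => x)); exact: Delta_const.
- move=> x y xy; rewrite /Delta_comm.
  have := faceE (fun b => q (mk3 x (if b then y else x) y)).
  rewrite /= (malcevL _ _ q_malcev) (malcevR _ _ q_malcev) => ->.
  by apply: Delta_q; [exact: Delta_const | exact: xy | exact: Delta_const].
- move=> x y z xy yz; rewrite /Delta_comm.
  have := faceE (fun b => q (mk3 (if b then y else x) y (if b then z else y))).
  rewrite /= (malcevL _ _ q_malcev) (malcevR _ _ q_malcev) => ->.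
  by apply: Delta_q; [exact: xy | exact: Delta_const | exact: yz].
- move=> s x y xy; rewrite /Delta_comm.
  rewrite (faceE (fun b => op (fun j => if b then y j else x j))).
  exact: (@Pol_Delta_op s (fun j => face_tuple I (x j) (y j)) xy).
Qed.

Lemma Delta_comm_at I x y (p0 : 'I_(2 ^ n)) : Delta_comm I x y ->
  Dl (fun p => if [forall i in I, bit p i == bit p0 i] then y else x).
Proof.
move=> /(Delta_map (fun i v => if i \in I then v == bit p0 i else v)).
congr Dl; apply: functional_extensionality => p; rewrite /face_tuple.
by congr (if _ then _ else _); apply: eq_forallb_in => i iI; rewrite bit_ord_of_bits iI.
Qed.

Definition depends_on (I : {set 'I_n}) (w : 'I_(2 ^ n) -> A) :=
  forall p p' : 'I_(2 ^ n), (forall i, i \in I -> bit p i = bit p' i) -> w p = w p'.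

Lemma Delta_transport I w z : Dl w -> depends_on I w -> depends_on I z ->
  (forall p, Delta_comm I (w p) (z p)) -> Dl z.
Proof.
move=> Dw dep_w dep_z wz.
pose Q v := [/\ Dl v, depends_on I v & forall p, Delta_comm I (v p) (z p)].
suff [] : Q z by [].
apply: fun_prefix_ind; first by exists w.
move=> {Dw dep_w wz} {}w k [Dw dep_w wz] below.
pose near (p : 'I_(2 ^ n)) := [forall i in I, bit p i == bit k i].
have nearP p : near p -> forall i, i \in I -> bit p i = bit k i.
  by move=> /forall_inP np i iI; apply/eqP/np.
pose w' p := q (mk3 (w p) (w k) (if near p then z k else w k)).
have w'E p : w' p = if near p then z p else w p.
  rewrite /w'; case: ifP => [/nearP np|_]; last exact: malcevR q_malcev.
  by rewrite (dep_w _ _ np) (dep_z _ _ np) (malcevL _ _ q_malcev).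
exists w'; first split.
- by apply: Delta_q => //; [exact: Delta_const | exact: Delta_comm_at].
- move=> p p' pp'; rewrite !w'E (dep_w _ _ pp') (dep_z _ _ pp').
  by congr (if _ then _ else _); apply: eq_forallb_in => i /pp' ->.
- move=> p; rewrite w'E; case: ifP => _ //.
  exact: cong_refl (Delta_comm_cong I) _.
move=> p le_pk; rewrite w'E; case: ifP => [//|far]; apply: below.
rewrite ltn_neqAle le_pk andbT; apply: contraFN far => /eqP pk.
have -> : p = k by exact: val_inj.
by apply/forall_inP.
Qed.

(* Project q(w, u, u k) onto the face below k: its top corner gets w k, all other points u k. *)
Lemma Delta_comm_of_agree_below (u w : 'I_(2 ^ n) -> A) (k : 'I_(2 ^ n)) : Dl u -> Dl w ->
  (forall j : 'I_(2 ^ n), j != k -> (forall i : 'I_n, bit j i -> bit k i) -> u j = w j) ->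
  Delta_comm [set i : 'I_n | bit k i] (u k) (w k).
Proof.
move=> Du Dw uw.
have := Delta_map (fun i v => v && bit k i) (Delta_q Dw Du (Delta_const (u k))).
congr Dl; apply: functional_extensionality => p; rewrite /face_tuple.
set j := ord_of_bits _; case: ifP => [/forall_inP pk | npk].
  have -> : j = k.
    rewrite -[RHS]ord_of_bits_bit; congr ord_of_bits; apply: functional_extensionality => i.
    by case ki: (bit k i); rewrite ?andbT ?andbF // pk // inE.
  exact: malcevR q_malcev.
rewrite uw ?(malcevL _ _ q_malcev) // => [|i]; last by rewrite bit_ord_of_bits => /andP[].
apply: contraFN npk => /eqP jk; apply/forall_inP => i; rewrite inE => ki.
by have := bit_ord_of_bits (fun i => bit p i && bit k i) i; rewrite -/j jk ki andbT => <-.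
Qed.

Lemma malcev_cube_rel gam k (tc : ('I_k -> bool) -> A) (c : 'I_k -> bool) :
  0 < k -> congruence B gam ->
  (forall c, (exists i : 'I_k, val i != k.-1 /\ c i = false) ->
     gam (tc (upd c false)) (tc (upd c true))) ->
  gam (q (mk3 (tc c) (tc (upd c false)) (tc (upd (fun _ => true) false))))
      (if [forall r, c r] then tc (fun _ => true) else tc (upd (fun _ => true) false)).
Proof.
move=> k_gt0 gam_cong step; have lt_last : k.-1 < k by rewrite ltn_predL.
pose last := Ordinal lt_last.
have updE (c' : 'I_k -> bool) v : c' last = v -> upd c' v = c'.
  move=> <-; apply: functional_extensionality => r; rewrite /upd.
  by case: eqP => // rk; congr c'; apply: val_inj.
case: ifP => [/forallP c1 | /forallPn [r cr]].
  have -> : c = fun _ => true by apply: functional_extensionality.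
  by rewrite (malcevR _ _ q_malcev); apply: cong_refl gam_cong _.
case cl: (c last); last first.
  by rewrite updE // (malcevL _ _ q_malcev); apply: cong_refl gam_cong _.
have r_last : val r != k.-1.
  by apply: contraNneq cr => rk; rewrite (_ : r = last) ?cl //; exact: val_inj.
have := step c (ex_intro _ r (conj r_last (negbTE cr))); rewrite (updE c true) // => gc.
apply: (cong_trans gam_cong (y := q (mk3 (tc (upd c false)) (tc (upd c false))
  (tc (upd (fun=> true) false))))).
  apply: (cong_termop gam_cong (proj1 q_malcev)) => i; rewrite /mk3.
  case: (val i) => [|[|_]]; [exact: cong_sym gam_cong _ _ gc | exact: cong_refl gam_cong _..].
by rewrite (malcevL _ _ q_malcev); apply: cong_refl gam_cong _.
Qed.

Section Centralizes.
Variable I : {set 'I_n}.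

Definition cube (p : 'I_(2 ^ n)) : 'I_#|I| -> bool := fun r => bit p (enum_val r).

Lemma depends_on_cube (g : ('I_#|I| -> bool) -> A) : depends_on I (fun p => g (cube p)).
Proof.
move=> p p' pp'; congr g; apply: functional_extensionality => r.
by rewrite /cube pp' // enum_valP.
Qed.

Lemma face_tuple_cube x y :
  face_tuple I x y = fun p => if [forall r, cube p r] then y else x.
Proof. by apply: functional_extensionality => p; rewrite /face_tuple forall_in_enum. Qed.

Lemma Delta_sel N (blk : 'I_N -> 'I_#|I|) a b (t : Op A N) (d : 'I_#|I| -> bool) :
  termop B t -> (forall j, subfam al I (blk j) (a j) (b j)) ->
  Dl (fun p => t (sel blk a b (fun r => d r && cube p r))).
Proof.
move=> tt ab.
pose v j := cvec (enum_val (blk j)) (a j) (if d (blk j) then b j else a j).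
have -> : (fun p => t (sel blk a b (fun r => d r && cube p r))) = fun p => t (fun j => v j p).
  apply: functional_extensionality => p; congr t; apply: functional_extensionality => j.
  by rewrite /sel /v cvecE /cube; case: (d _); case: (bit _ _).
apply: (Pol_Delta_termop tt) => j; apply: Delta_gen; rewrite /subfam.
by case: (d _); [exact: ab | exact: cong_refl (al_cong _) _].
Qed.

Lemma Delta_comm_centralizes : I != set0 -> centralizes B (subfam al I) (Delta_comm I).
Proof.
move=> I_neq0 N blk a b t tt ab _ step; pose tc c := t (sel blk a b c).
pose u := tc (upd (fun _ => true) false).
have updE (c : 'I_#|I| -> bool) : upd c false = fun r => (val r != #|I|.-1) && c r.
  by apply: functional_extensionality => r; rewrite /upd; case: eqP.
rewrite /Delta_comm face_tuple_cube.
apply: (@Delta_transport _ (fun p => q (mk3 (tc (cube p)) (tc (upd (cube p) false)) u))).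
- apply: Delta_q; last exact: Delta_const.
    exact: (Delta_sel (fun _ => true) tt ab).
  have -> : (fun p => tc (upd (cube p) false)) =
            fun p => t (sel blk a b (fun r => (val r != #|I|.-1) && cube p r)).
    by apply: functional_extensionality => p; rewrite /tc updE.
  exact: Delta_sel.
- exact: (depends_on_cube (fun c => q (mk3 (tc c) (tc (upd c false)) u))).
- exact: (depends_on_cube (fun c => if [forall r, c r] then _ else _)).
move=> p; apply: malcev_cube_rel (Delta_comm_cong I) step.
by rewrite card_gt0.
Qed.
End Centralizes.

Lemma Delta_comm_sub I x y gam : I != set0 -> Delta_comm I x y ->
  congruence B gam -> centralizes B (subfam al I) gam -> gam x y.
Proof.
move=> /set0Pn [i0 i0I] /Delta_term_generated [N [G [t [ok xyE]]]] gam_cong cent.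
pose rk i : 'I_#|I| := enum_rank_in i0I i.
pose b j := if (G j).1.1 \in I then (G j).2 else (G j).1.2.
apply: (corner_rel (k := #|I|) (t := eval t) (blk := fun j => rk (G j).1.1)
  (a := fun j => (G j).1.2) (b := b) gam_cong cent).
- by apply/card_gt0P; exists i0.
- by exists t.
- move=> j; rewrite /subfam /b /rk; case: ifP => jI; first by rewrite enum_rankK_in.
  exact: cong_refl (al_cong _) _.
move=> c; pose pc := ord_of_bits (fun i => (i \in I) && c (rk i)).
have -> : sel (fun j => rk (G j).1.1) (fun j => (G j).1.2) b c = gen_tuple G pc.
  apply: functional_extensionality => j.
  rewrite /sel /gen_tuple cvecE bit_ord_of_bits /b.
  by case: ((G j).1.1 \in I); case: (c _).
rewrite -[eval t _]/((fun p => eval t (gen_tuple G p)) pc) -xyE /face_tuple.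
rewrite forall_in_enum; congr (if _ then _ else _); apply: eq_forallb => r.
by rewrite bit_ord_of_bits enum_valP /rk enum_valK_in.
Qed.

Lemma commutatorE I x y : I != set0 ->
  commutator B (subfam al I) x y <-> Delta_comm I x y.
Proof.
move=> I_neq0; split; last by move=> xy gam; apply: Delta_comm_sub.
by apply; [exact: Delta_comm_cong | exact: Delta_comm_centralizes].
Qed.
End Delta.

Lemma face_tuple0 A n (x y : A) : face_tuple (set0 : {set 'I_n}) x y = fun _ => y.
Proof.
apply: functional_extensionality => p; rewrite /face_tuple.
by case: forall_inP => // -[] i; rewrite in_set0.
Qed.

Section DeltaDeterminedByCommutators.
Variables (A : Type) (B1 B2 : algebra A) (n : nat) (al : 'I_n -> A -> A -> Prop).
Variable q : Op A 3.
Hypotheses (n_gt0 : 0 < n) (q1 : malcev B1 q) (q2 : malcev B2 q).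
Hypotheses (cong1 : forall i, congruence B1 (al i)) (cong2 : forall i, congruence B2 (al i)).

Lemma Delta_sub_of_faces :
  (forall I x y, I != set0 -> Delta_comm B1 al I x y -> Delta_comm B2 al I x y) ->
  forall w, Delta B1 al w -> Delta B2 al w.
Proof.
move=> faces w Dw; pose Q v := Delta B1 al v /\ Delta B2 al v.
suff [] : Q w by [].
apply: fun_prefix_ind.
  by exists (fun _ => w (Ordinal (expn_gt0 2 n))); split; exact: Delta_const.
move=> v k [Dv1 Dv2] below; pose S := [set i : 'I_n | bit k i].
have F1 : Delta_comm B1 al S (v k) (w k).
  apply: (Delta_comm_of_agree_below cong1 n_gt0 q1) => // j jk jk_bits; apply: below.
  by rewrite ltn_neqAle jk leq_bits.
have F2 : Delta_comm B2 al S (v k) (w k).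
  have [S0|/faces] := eqVneq S set0; last exact.
  by rewrite /Delta_comm S0 face_tuple0; exact: Delta_const.
exists (fun p => q (mk3 (v p) (v k) (face_tuple S (v k) (w k) p))).
  by split; apply: Delta_q => //; exact: Delta_const.
move=> p le_pk; rewrite /face_tuple; case: ifP => [/forall_inP Sp | nSp].
  have -> : p = k.
    apply/val_inj/eqP; rewrite eqn_leq le_pk.
    by apply: leq_bits => i ki; apply: Sp; rewrite inE.
  exact: malcevL q2.
rewrite (malcevR _ _ q2); apply: below; rewrite ltn_neqAle le_pk andbT.
apply: contraFN nSp => /eqP pk; have -> : p = k by exact: val_inj.
by apply/forall_inP => i; rewrite inE.
Qed.
End DeltaDeterminedByCommutators.

Lemma Delta_eq_of_commutator_eq A (B1 B2 : algebra A) n (al : 'I_n -> A -> A -> Prop) q :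
  0 < n -> malcev B1 q -> malcev B2 q ->
  (forall i, congruence B1 (al i)) -> (forall i, congruence B2 (al i)) ->
  (forall I, I != set0 -> forall x y,
     commutator B1 (subfam al I) x y <-> commutator B2 (subfam al I) x y) ->
  forall w, Delta B1 al w <-> Delta B2 al w.
Proof.
move=> n_gt0 q1 q2 cong1 cong2 comm w.
split; [apply: (Delta_sub_of_faces n_gt0 q1 q2 cong1 cong2) |
        apply: (Delta_sub_of_faces n_gt0 q2 q1 cong2 cong1)] => I x y I0;
  have c1 := commutatorE cong1 n_gt0 q1 x y I0;
  have c2 := commutatorE cong2 n_gt0 q2 x y I0.
  by move=> /c1 /(comm _ I0) /c2.
by move=> /c2 /(comm _ I0) /c1.
Qed.

Lemma Delta_sub A (B1 B2 : algebra A) n (al : 'I_n -> A -> A -> Prop) :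
  (forall s : sym B1, Pol (Delta B2 al) (@op A B1 s)) ->
  forall w, Delta B1 al w -> Delta B2 al w.
Proof.
move=> ops w Dw; apply: (Dw (Delta B2 al)) => [s v Dv | i a b ab].
  exact: ops s v Dv.
exact: Delta_gen ab.
Qed.

Lemma Pol_clone A N (R : ('I_N -> A) -> Prop) : is_clone (Pol R).
Proof.
split=> [m i f fE v Rv | m k g h f Pg Ph fE v Rv].
  by have -> : (fun p => f (fun j => v j p)) = v i by apply: functional_extensionality => p.
have -> : (fun p => f (fun j => v j p)) = fun p => g (fun l => h l (fun j => v j p)).
  by apply: functional_extensionality => p.
exact: (Pg (fun l p => h l (fun j => v j p)) (fun l => Ph l v Rv)).
Qed.

Lemma Pol_Delta_preserves A (B : algebra A) n (al : 'I_n -> A -> A -> Prop) k (f : Op A k) i :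
  congruence B (al i) -> Pol (Delta B al) f -> preserves f (al i).
Proof.
move=> al_cong Pf x y xy.
have cvec_at (c : 'I_n -> bool) :
    (fun j => cvec i (x j) (y j) (ord_of_bits c)) = if c i then y else x.
  by apply: functional_extensionality => j; rewrite cvecE bit_ord_of_bits; case: (c i).
have := Delta_edge al_cong (Pf (fun j => cvec i (x j) (y j)) (fun j => Delta_gen (xy j))).
by rewrite /= !cvec_at eqxx.
Qed.

Lemma termop_clone_alg A (C : clone A) k (f : Op A k) : C k f -> termop (clone_alg C) f.
Proof.
move=> Cf; pose s : sym (clone_alg C) := existT _ k (exist (C k) f Cf).
by exists (@App A (clone_alg C) k s (fun i => Var _ i)).
Qed.

Lemma malcev_clone_alg A (C : clone A) (B : algebra A) q :
  malcev B q -> C 3 q -> malcev (clone_alg C) q.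
Proof. by move=> [_ q_id] Cq; split=> //; exact: termop_clone_alg. Qed.

Lemma congruence_clone_alg A (C : clone A) (gam : A -> A -> Prop) :
  Defs.equivalence_rel gam -> (forall k f, C k f -> preserves f gam) ->
  congruence (clone_alg C) gam.
Proof. by move=> eq_gam pres; split=> // -[k [f Cf]]; exact: pres. Qed.

Lemma clone_sub_Pol_Delta A (C : clone A) n (al : 'I_n -> A -> A -> Prop) :
  clone_sub C (Pol (Delta (clone_alg C) al)).
Proof.
move=> k f Cf; pose s : sym (clone_alg C) := existT _ k (exist (C k) f Cf).
exact: (@Pol_Delta_op _ (clone_alg C) n al s).
Qed.

Lemma Delta_clone_alg_Pol A (B : algebra A) n (al : 'I_n -> A -> A -> Prop) w :
  Delta (clone_alg (Pol (Delta B al))) al w <-> Delta B al w.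
Proof.
split; apply: Delta_sub; first by case=> k [f Pf].
by move=> s; apply: clone_sub_Pol_Delta; exact: Pol_Delta_op.
Qed.

Theorem mainTheorem2 (A : Type) (Al : algebra A) (q : Op A 3) (hq : malcev Al q)
  (n : nat) (hn : 1 <= n) (al : 'I_n -> A -> A -> Prop)
  (hal : forall i, congruence Al (al i)) :
  good_clone Al q al (Pol (Delta Al al)) /\
  (forall D : clone A, good_clone Al q al D -> clone_sub D (Pol (Delta Al al))).
Proof.
have Pol_q : Pol (Delta Al al) q by exact: Pol_Delta_termop hq.1.
have Pol_cong i : congruence (clone_alg (Pol (Delta Al al))) (al i).
  by apply: congruence_clone_alg; [case: (hal i) | move=> k f; apply: Pol_Delta_preserves].
split.
  split=> [||k f Pf i|I I0 x y]; [exact: Pol_clone | exact: Pol_q | |].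
    exact: Pol_Delta_preserves Pf.
  rewrite (commutatorE hal hn hq x y I0).
  rewrite (commutatorE Pol_cong hn (malcev_clone_alg hq Pol_q) x y I0).
  exact: iff_sym (Delta_clone_alg_Pol _ _ _).
move=> D [_ Dq Dpres Dcomm] k f Df v Dv.
have D_cong i : congruence (clone_alg D) (al i).
  by apply: congruence_clone_alg; [case: (hal i) | move=> ? ? /Dpres].
have DeltaE := Delta_eq_of_commutator_eq hn hq (malcev_clone_alg hq Dq) hal D_cong Dcomm.
by apply/DeltaE; apply: clone_sub_Pol_Delta Df _ _ => i; apply/DeltaE.
Qed.
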